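(* Let $X$ be a topological space which is not a Baire space. Then there exist a nonempty open set $U\subseteq X$ and a fragmentable function $f\colon X\to\mathbb R$ such that $f$ has no point of continuity in $U$ and $f(X)\subseteq\{1/n:n\in\mathbb N\}$. Moreover, if $X$ is perfectly normal, then $f$ can be chosen to have, in addition, the Lebesgue property.
   Context: A topological space is Baire if every nonempty open subset of it is nonmeager in it. $f\colon X\to\mathbb R$ is fragmentable if for every $\varepsilon>0$ and every nonempty closed $F\subseteq X$ there is an open $U$ with $U\cap F\neq\emptyset$ and $\operatorname{diam} f(U\cap F)<\varepsilon$; it has the Lebesgue property if for every $\varepsilon>0$ there are closed sets $X_n$ ($n\in\mathbb N$) with $X=\bigcup_n X_n$ and $\operatorname{diam} f(X_n)\le\varepsilon$ for all $n$. *)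

From HB Require Import structures.
From mathcomp Require Import all_boot all_order all_algebra.
From mathcomp Require Import all_classical all_reals all_analysis.
Set Implicit Arguments. Unset Strict Implicit. Unset Printing Implicit Defensive.
Import Order.TTheory GRing.Theory Num.Theory.
Import numFieldNormedType.Exports.
Local Open Scope classical_set_scope.
Local Open Scope ring_scope.

(* diameter of a subset of R, as an extended real (sup of |x - y|);
   diam set0 = -oo *)
Definition diam {R : realType} (S : set R) : \bar R :=
  ereal_sup [set (`|x - y|)%:E | x in S & y in S].

Definition nowhere_dense {X : topologicalType} (A : set X) : Prop :=
  (closure A)° = set0.

Definition meager {X : topologicalType} (A : set X) : Prop :=
  exists N : nat -> set X, (forall n, nowhere_dense (N n)) /\
    A `<=` \bigcup_n N n.

Definition baire_space (X : topologicalType) : Prop :=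
  forall U : set X, open U -> U !=set0 -> ~ meager U.

Definition fragmentable {R : realType} {X : topologicalType} (f : X -> R) : Prop :=
  forall eps : R, 0 < eps -> forall F : set X, closed F -> F !=set0 ->
    exists U : set X, [/\ open U, U `&` F !=set0 &
      (diam (f @` (U `&` F)) < eps%:E)%E].

Definition lebesgue_property {R : realType} {X : topologicalType} (f : X -> R) : Prop :=
  forall eps : R, 0 < eps -> exists Xn : nat -> set X,
    [/\ forall n, closed (Xn n), \bigcup_n Xn n = setT &
        forall n, (diam (f @` Xn n) <= eps%:E)%E].

Definition perfectly_normal (X : topologicalType) : Prop :=
  normal_space X /\
  forall A : set X, closed A ->
    exists G : nat -> set X, (forall n, open (G n)) /\ A = \bigcap_n G n.

(* Some nonempty open U is meager, covered by nowhere dense sets N_i.  The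
   closed sets E_n = (X \ U) u cl N_0 u ... u cl N_(n-1) increase to X, and no
   E_n contains a nonempty open piece of U.  Put f x = 1/(k+1), where k is the
   least n with x in E_n.  Every neighbourhood of a point x of U contains points
   of U of level above that of x, where f is smaller by a fixed gap: f is
   discontinuous on U.  The sets [level >= j] are open and f is constant on
   each level set; given 1/(N+1) < eps, on F meet [level >= j] with
   j = min(N, max level on F), f is either constant or bounded by 1/(N+1):
   f is fragmentable.  If closed
   sets are G_delta, the level sets E_k meet [level >= k] are F_sigma, and
   refining them into countably many closed pieces gives the Lebesgue
   property. *)

From HB Require Import structures.
From mathcomp Require Import all_boot all_order all_algebra.
From mathcomp Require Import all_classical all_reals all_analysis.
From mathcomp Require Import borel_hierarchy lra.
Set Implicit Arguments.
Unset Strict Implicit.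
Unset Printing Implicit Defensive.
Import Order.TTheory GRing.Theory Num.Theory.
Import numFieldNormedType.Exports.
Local Open Scope classical_set_scope.
Local Open Scope ring_scope.

Lemma diam_le (R : realType) (S : set R) (c : R) :
  (forall a b, S a -> S b -> `|a - b| <= c) -> (diam S <= c%:E)%E.
Proof.
move=> h; apply: ge_ereal_sup => _ [a Sa [b Sb <-]]; rewrite lee_fin; exact: h.
Qed.

Lemma diam_image_const (R : realType) (T : Type) (f : T -> R) (A : set T) (c : R) :
  (forall x, A x -> f x = c) -> (diam (f @` A) <= 0%:E)%E.
Proof.
by move=> fc; apply: diam_le => _ _ [a Aa <-] [b Ab <-]; rewrite !fc // subrr normr0.
Qed.

Lemma diam_image_le (R : realType) (T : Type) (f : T -> R) (A : set T) (c : R) :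
  (forall x, A x -> 0 < f x <= c) -> (diam (f @` A) <= c%:E)%E.
Proof.
move=> fc; apply: diam_le => _ _ [a /fc /andP[a0 ac] <-] [b /fc /andP[b0 bc] <-].
by rewrite ler_norml; apply/andP; split; lra.
Qed.

Lemma exists_truncated_max (T : Type) (g : T -> nat) (F : set T) (N : nat) :
  F !=set0 -> exists j, (exists2 x, F x & (j <= g x)%N) /\
                        (j = N \/ forall x, F x -> (g x <= j)%N).
Proof.
case=> x0 Fx0; elim: N => [|N [j [[x Fx jx] [jN|Fj]]]].
- by exists 0%N; split; [exists x0 | left].
- rewrite {}jN in jx; have [FN|] := pselect (forall x, F x -> (g x <= N)%N).
    by exists N; split; [exists x | right].
  move=> /existsNP[y /not_implyP[Fy /negP]]; rewrite -ltnNge => Ny.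
  by exists N.+1; split; [exists y | left].
- by exists j; split; [exists x | right].
Qed.

Section Fsigma_lemmas.
Context {X : topologicalType}.

Lemma open_Fsigma (A : set X) :
  (forall B : set X, closed B -> Gdelta B) -> open A -> Fsigma A.
Proof.
move=> closed_Gdelta oA; have [G oG AG] := closed_Gdelta _ (open_closedC oA).
exists (fun n => ~` G n) => [n|]; first exact: open_closedC.
by rewrite -setC_bigcap -AG setCK.
Qed.

Lemma Fsigma_closedI (A B : set X) : closed A -> Fsigma B -> Fsigma (A `&` B).
Proof.
move=> cA [C cC ->]; exists (fun n => A `&` C n); last exact: setI_bigcupr.
by move=> n; exact: closedI.
Qed.

Lemma Fsigma_closed_refinement (A : nat -> set X) : (forall n, Fsigma (A n)) ->
  exists C : nat -> set X, [/\ forall i, closed (C i),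
    \bigcup_i C i = \bigcup_n A n & forall i, exists n, C i `<=` A n].
Proof.
move=> FA.
have /choice[C CA] : forall n, exists C : nat -> set X,
    (forall m, closed (C m)) /\ A n = \bigcup_m C m.
  by move=> n; have [C cC AC] := FA n; exists C.
pose piece i := if (unpickle i : option (nat * nat)) is Some (n, m)
  then C n m else set0.
exists piece; split.
- move=> i; rewrite /piece; case: unpickle => [[n m]|]; last exact: closed0.
  exact: (CA n).1.
- apply/seteqP; split=> x [i _].
  + rewrite /piece; case: unpickle => [[n m]|] // Cx.
    by exists n => //; rewrite (CA n).2; exists m.
  + rewrite (CA i).2 => -[m _ Cx]; exists (pickle (i, m)) => //.
    by rewrite /piece pickleK.
- move=> i; rewrite /piece; case: unpickle => [[n m]|]; last by exists 0%N.
  by exists n; rewrite (CA n).2; exact: bigcup_sup.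
Qed.

End Fsigma_lemmas.

Lemma lebesgue_property_Fsigma_pieces (R : realType) (X : topologicalType)
    (f : X -> R) (A : nat -> set X) (c : nat -> R) :
  (forall n, Fsigma (A n)) -> \bigcup_n A n = setT ->
  (forall n x, A n x -> f x = c n) -> lebesgue_property f.
Proof.
move=> FA AT fc eps eps0; have [C [cC CA CA_sub]] := Fsigma_closed_refinement FA.
exists C; split => // [|i]; first by rewrite CA.
have [n CAn] := CA_sub i.
apply: le_trans (diam_image_const (c := c n) _) _; last by rewrite lee_fin ltW.
by move=> x /CAn /fc.
Qed.

Section level.
Variables (R : realType) (X : topologicalType) (E : nat -> set X).
Hypotheses (E_closed : forall n, closed (E n))
  (E_homo : {homo E : n m / (n <= m)%N >-> n `<=` m})
  (E_cover : forall x, exists n, E n x).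

Let E_coverb x : exists n, `[< E n x >].
Proof. by have [n] := E_cover x; exists n; apply/asboolP. Qed.

Definition level x := ex_minn (E_coverb x).

Lemma level_leP x n : (level x <= n)%N <-> E n x.
Proof.
rewrite /level; case: ex_minnP => m /asboolP Em m_min; split.
- by move=> mn; exact: E_homo mn _ Em.
- by move=> En; apply: m_min; exact/asboolP.
Qed.

Lemma open_level_ge j : open [set x | (j <= level x)%N].
Proof.
case: j => [|j].
  by rewrite (_ : [set x | _] = setT); [exact: openT | apply/seteqP].
rewrite (_ : [set x | _] = ~` E j); first exact: closed_openC.
apply/seteqP; split=> x /=; rewrite ltnNge.
- by move=> /negP + /level_leP.
- by move=> nEj; apply/negP => /level_leP.
Qed.

Definition recip_level x : R := (level x).+1%:R^-1.

Lemma recip_level_range :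
  range recip_level `<=` [set (n.+1)%:R^-1 | n in [set: nat]].
Proof. by move=> _ [x _ <-]; exists (level x). Qed.

Lemma recip_level_gt0 x : 0 < recip_level x.
Proof. by rewrite invr_gt0 ltr0n. Qed.

Lemma recip_level_le x n : (n <= level x)%N -> recip_level x <= n.+1%:R^-1.
Proof. by move=> nx; rewrite lef_pV2 ?posrE ?ltr0n // ler_nat. Qed.

Lemma recip_level_fragmentable : fragmentable recip_level.
Proof.
move=> eps eps0 F _ F0.
have [N Neps] : exists N, N.+1%:R^-1 < eps.
  exists (Num.truncn eps^-1).
  by rewrite -ltf_pV2 ?posrE ?invr_gt0 // invrK truncnS_gt.
have [j [[x Fx jx] top]] := exists_truncated_max level N F0.
exists [set x | (j <= level x)%N]; split; [exact: open_level_ge | by exists x |].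
case: top => [-> | Fj].
- apply: (le_lt_trans (diam_image_le (c := N.+1%:R^-1) _)).
    by move=> y [Ny _]; rewrite recip_level_gt0 recip_level_le.
  by rewrite lte_fin.
- apply: (le_lt_trans (diam_image_const (c := j.+1%:R^-1) _)).
    by move=> y [jy Fy]; rewrite /recip_level (@anti_leq (level y) j) // jy Fj.
  by rewrite lte_fin.
Qed.

Lemma recip_level_lebesgue :
  (forall A : set X, closed A -> Gdelta A) -> lebesgue_property recip_level.
Proof.
move=> closed_Gdelta.
apply: (@lebesgue_property_Fsigma_pieces _ _ _
  (fun k => E k `&` [set x | (k <= level x)%N]) (fun k => k.+1%:R^-1)).
- move=> k; apply: Fsigma_closedI => //; exact: open_Fsigma (open_level_ge k).
- apply/seteqP; split => // x _; exists (level x) => //.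
  by split; [apply/level_leP | rewrite /=].
- move=> k x [/level_leP xk kx].
  by rewrite /recip_level (@anti_leq (level x) k) // xk kx.
Qed.

Variable U : set X.
Hypothesis E_nowhere_in_U : forall n (V : set X),
  open V -> V `&` U !=set0 -> (V `&` U) `\` E n !=set0.

Lemma recip_level_discontinuous x : U x -> ~ {for x, continuous recip_level}.
Proof.
move=> Ux /cvgrPdist_lt.
have gap : 0 < recip_level x - (level x).+2%:R^-1.
  by rewrite subr_gt0 ltf_pV2 ?posrE ?ltr0n // ltr_nat.
move=> /(_ _ gap); rewrite nbhsE => -[V [oV Vx] V_near].
have [y [[Vy _] /level_leP]] := E_nowhere_in_U (level x) oV (ex_intro _ x (conj Vx Ux)).
move=> /negP; rewrite -ltnNge => xy.
have := V_near y Vy; rewrite ltNge => /negP; apply.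
by rewrite (le_trans _ (ler_norm _)) // lerD2l lerN2 recip_level_le.
Qed.

End level.

Lemma not_baire_meager_open (X : topologicalType) :
  ~ baire_space X -> exists U : set X, [/\ open U, U !=set0 & meager U].
Proof.
move=> nB; apply: contrapT => noU; apply: nB => U oU U0 mU.
by apply: noU; exists U.
Qed.

Lemma nowhere_dense_avoid (X : topologicalType) (A W : set X) :
  nowhere_dense A -> open W -> W !=set0 -> W `\` closure A !=set0.
Proof.
move=> ndA oW [w Ww]; apply: contrapT => W_cl.
suff /interiorS : W `<=` closure A by rewrite (interior_id W).1 // ndA => /(_ w Ww).
by move=> y Wy; apply: contrapT => ncl; apply: W_cl; exists y.
Qed.

Section meager_filtration.
Variables (X : topologicalType) (U : set X) (N : nat -> set X).
Hypotheses (U_open : open U) (N_nowhere_dense : forall n, nowhere_dense (N n))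
  (U_sub : U `<=` \bigcup_n N n).

Definition meager_filtration n := ~` U `|` \bigcup_(i < n) closure (N i).

Lemma closed_bigcup_closure n : closed (\bigcup_(i < n) closure (N i)).
Proof.
by rewrite bigcup_mkord; apply: closed_bigsetU => i _; exact: closed_closure.
Qed.

Lemma bigcup_closure_avoid n W :
  open W -> W !=set0 -> W `\` \bigcup_(i < n) closure (N i) !=set0.
Proof.
elim: n => [|n IH] oW W0.
  by case: W0 => w Ww; exists w; split=> // -[].
have oW' : open (W `\` \bigcup_(i < n) closure (N i)).
  by apply: openI oW _; exact/closed_openC/closed_bigcup_closure.
have [y [[Wy ny] nNy]] := nowhere_dense_avoid (N_nowhere_dense n) oW' (IH oW W0).
exists y; split => // -[i /=]; rewrite ltnS leq_eqVlt => /orP[/eqP -> //|ilt] Ny.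
by apply: ny; exists i.
Qed.

Lemma meager_filtration_closed n : closed (meager_filtration n).
Proof. by apply: closedU; [exact: open_closedC | exact: closed_bigcup_closure]. Qed.

Lemma meager_filtration_homo :
  {homo meager_filtration : n m / (n <= m)%N >-> n `<=` m}.
Proof.
move=> n m nm x [Ux|[i /= im Nx]]; [by left | right].
by exists i => //=; exact: leq_trans nm.
Qed.

Lemma meager_filtration_cover x : exists n, meager_filtration n x.
Proof.
have [Ux|nUx] := pselect (U x); last by exists 0%N; left.
have [n _ Nx] := U_sub Ux.
by exists n.+1; right; exists n => //=; exact: subset_closure.
Qed.

Lemma meager_filtration_nowhere_in_U n V :
  open V -> V `&` U !=set0 -> (V `&` U) `\` meager_filtration n !=set0.
Proof.
move=> oV VU0; have [y [[Vy Uy] ny]] := bigcup_closure_avoid n (openI oV U_open) VU0.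
by exists y; split => // -[].
Qed.

End meager_filtration.

Theorem lemma2p7 (R : realType) (X : topologicalType) :
  ~ baire_space X ->
  (exists (U : set X) (f : X -> R),
      [/\ open U, U !=set0, fragmentable f,
          (forall x, U x -> ~ {for x, continuous f}) &
          range f `<=` [set (n.+1)%:R^-1 | n in [set: nat]]]) /\
  (perfectly_normal X ->
   exists (U : set X) (f : X -> R),
      [/\ open U, U !=set0, fragmentable f,
          (forall x, U x -> ~ {for x, continuous f}) &
          range f `<=` [set (n.+1)%:R^-1 | n in [set: nat]] /\
          lebesgue_property f]).
Proof.
move=> /not_baire_meager_open[U [U_open U0 [N [N_nowhere_dense U_sub]]]].
have E_closed := meager_filtration_closed (N := N) U_open.
have E_homo := @meager_filtration_homo X U N.
have E_cover := meager_filtration_cover U_sub.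
have E_nowhere := meager_filtration_nowhere_in_U U_open N_nowhere_dense.
pose f := recip_level R E_cover.
have f_frag : fragmentable f := recip_level_fragmentable E_closed E_homo E_cover.
have f_disc x : U x -> ~ {for x, continuous f}.
  exact: (recip_level_discontinuous E_homo E_nowhere).
split; first by exists U, f; split => //; exact: recip_level_range.
move=> [_ closed_Gdelta]; exists U, f; split => //; split.
  exact: recip_level_range.
apply: (recip_level_lebesgue E_closed E_homo) => A /closed_Gdelta[G [G_open ->]].
by exists G.
Qed.
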